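(* Let $G$ be a torsion-free locally compact abelian group and let $H$ be an open pure subgroup of $G$. Then $G_{op}=H_{op}$.
   Context: A subgroup $H$ of an abelian group $G$ is pure if $nH=H\cap nG$ for every positive integer $n$. For an LCA group $G$, $G_{op}$ denotes the intersection of all open pure subgroups of $G$; $H$ is regarded as an LCA group with the subspace topology. *)

From HB Require Import structures.
From mathcomp Require Import all_boot all_order all_algebra.
From mathcomp Require Import all_classical all_reals all_analysis.
Set Implicit Arguments. Unset Strict Implicit. Unset Printing Implicit Defensive.
Import Order.TTheory GRing.Theory Num.Theory.
Local Open Scope classical_set_scope.
Local Open Scope ring_scope.

Definition is_subgroup {G : zmodType} (H : set G) : Prop :=
  H 0 /\ (forall x y, H x -> H y -> H (x - y)).

Definition nmul {G : zmodType} (n : nat) (H : set G) : set G :=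
  [set y | exists2 x, H x & y = x *+ n].

Definition pure_in {G : zmodType} (H K : set G) : Prop :=
  forall n : nat, (0 < n)%N -> nmul n K = K `&` nmul n H.

Definition open_in {G : topologicalType} (H K : set G) : Prop :=
  exists2 U : set G, open U & K = U `&` H.

Definition open_pure_subgroup_of {G : topologicalZmodType} (H K : set G) : Prop :=
  K `<=` H /\ is_subgroup K /\ open_in H K /\ pure_in H K.

Definition op_part {G : topologicalZmodType} (H : set G) : set G :=
  \bigcap_(K in [set K | open_pure_subgroup_of H K]) K.

Definition torsion_free (G : zmodType) : Prop :=
  forall (x : G) (n : nat), (0 < n)%N -> x *+ n = 0 -> x = 0.

Definition LCA (G : topologicalZmodType) : Prop :=
  hausdorff_space G /\ locally_compact [set: G].

From HB Require Import structures.
From mathcomp Require Import all_boot all_order all_algebra.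
From mathcomp Require Import all_classical all_reals all_analysis.
Set Implicit Arguments. Unset Strict Implicit. Unset Printing Implicit Defensive.
Import GRing.Theory.
Local Open Scope classical_set_scope.
Local Open Scope ring_scope.

(* We show that the open pure subgroups of H and those of G determine the same
   intersection:
   - purity is transitive: an open pure subgroup K of H is pure in G, because
     nK = K ∩ nH = K ∩ H ∩ nG = K ∩ nG; it is open in G since H is open.
     Hence G_op ⊆ H_op.
   - conversely, if K is an open pure subgroup of G then K ∩ H is an open pure
     subgroup of H.  Purity uses torsion-freeness: multiplication by n is
     injective, so n(K ∩ H) = nK ∩ nH = K ∩ nG ∩ nH = (K ∩ H) ∩ nH.
     Since H_op ⊆ K ∩ H ⊆ K for every such K, we get H_op ⊆ G_op. *)

Section Subgroups.
Variable G : zmodType.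
Implicit Types (K H : set G) (x y : G).

Lemma subgroup_opp K x : is_subgroup K -> K x -> K (- x).
Proof. by move=> [K0 KB] Kx; rewrite -sub0r; apply: KB. Qed.

Lemma subgroup_add K x y : is_subgroup K -> K x -> K y -> K (x + y).
Proof.
move=> sK Kx Ky; rewrite -[y]opprK; case: (sK) => _ KB.
by apply: KB => //; apply: subgroup_opp.
Qed.

Lemma subgroup_muln K x n : is_subgroup K -> K x -> K (x *+ n).
Proof.
move=> sK Kx; elim: n => [|n IH]; first by rewrite mulr0n; case: sK.
by rewrite mulrS; apply: subgroup_add.
Qed.

Lemma subgroupI K H : is_subgroup K -> is_subgroup H -> is_subgroup (K `&` H).
Proof.
move=> [K0 KB] [H0 HB]; split=> // a b [Ka Ha] [Kb Hb].
by split; [apply: KB | apply: HB].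
Qed.

Lemma nmul_sub K n : is_subgroup K -> nmul n K `<=` K.
Proof. by move=> sK _ [x Kx ->]; apply: subgroup_muln. Qed.

Lemma nmulS K H n : K `<=` H -> nmul n K `<=` nmul n H.
Proof. by move=> KH _ [x Kx ->]; exists x => //; apply: KH. Qed.

(* In a torsion-free group multiplication by n > 0 is injective, so it
   commutes with intersections. *)
Lemma nmulI K H n : torsion_free G -> (0 < n)%N ->
  nmul n (K `&` H) = nmul n K `&` nmul n H.
Proof.
move=> tf n0; apply/seteqP; split=> [_ [x [Kx Hx] ->] | y [[k Kk ->] [h Hh ekh]]].
  by split; exists x.
have k_eq_h : k = h.
  apply/eqP; rewrite -subr_eq0; apply/eqP; apply: (tf _ n n0).
  by rewrite mulrnBl ekh subrr.
by exists k => //; split; rewrite // k_eq_h.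
Qed.

Lemma pure_in_trans K H : K `<=` H -> pure_in [set: G] H -> pure_in H K ->
  pure_in [set: G] K.
Proof.
move=> KH pH pK n n0; rewrite (pK n n0) (pH n n0) setIA.
by congr (_ `&` _); apply/setIidl.
Qed.

Lemma pure_in_setI K H : torsion_free G -> is_subgroup H ->
  pure_in [set: G] K -> pure_in H (K `&` H).
Proof.
move=> tf sH pK n n0; rewrite nmulI // (pK n n0) -setIA.
have nHG : nmul n H `<=` nmul n [set: G] by apply: nmulS.
rewrite (setIidr nHG) -setIA; congr (_ `&` _).
by apply/esym/setIidr; apply: nmul_sub.
Qed.

End Subgroups.

Section OpenSubgroups.
Variable G : topologicalZmodType.
Implicit Types K H : set G.

Lemma open_in_setT K : open_in [set: G] K <-> open K.
Proof.
split=> [[U oU ->] | oK]; first by rewrite setIT.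
by exists K => //; rewrite setIT.
Qed.

Lemma open_pure_subgroup_trans H K : open H -> pure_in [set: G] H ->
  open_pure_subgroup_of H K -> open_pure_subgroup_of [set: G] K.
Proof.
move=> oH pH [KH [sK [[U oU eK] pK]]]; split=> //; split=> //; split.
  by apply/open_in_setT; rewrite eK; apply: openI.
exact: pure_in_trans pK.
Qed.

Lemma open_pure_subgroup_setI H K : torsion_free G -> is_subgroup H ->
  open_pure_subgroup_of [set: G] K -> open_pure_subgroup_of H (K `&` H).
Proof.
move=> tf sH [_ [sK [oK pK]]]; split; first exact: subIsetr.
split; first exact: subgroupI.
split; first by exists K => //; apply/open_in_setT.
exact: pure_in_setI.
Qed.

End OpenSubgroups.

Theorem lemma7 (G : topologicalZmodType) (H : set G) :
  LCA G -> torsion_free G ->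
  is_subgroup H -> open H -> pure_in [set: G] H ->
  op_part [set: G] = op_part H.
Proof.
move=> _ tf sH oH pH; apply/seteqP; split => x xGop K.
- by move=> /(open_pure_subgroup_trans oH pH); apply: xGop.
- by move=> /(open_pure_subgroup_setI tf sH) /xGop [].
Qed.
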